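(* Let $N\ge1$ and $H\ge1$ be constants. Let $z_1,\dots,z_n$ be numbers with $0\le z_k\le H$, and define $Z_0,Z_1,\dots,Z_n$ by $1\le Z_0\le 2H-1$ and $Z_k=Z_{k-1}+z_k$ for $k\ge1$. Then for all $n\ge1$, \[ \sum_{k=1}^n\frac{z_k}{\sqrt{kN+Z_{k-1}}}\le\sum_{k=1}^n\sqrt{\frac{(k+1)H-1}{kN+(k+1)H-1}}\,\frac{z_k}{\sqrt{Z_{k-1}}}\le\sqrt{\frac{2H-1}{N+2H-1}}\sum_{k=1}^n\frac{z_k}{\sqrt{Z_{k-1}}}. \] *)

From HB Require Import structures.
From mathcomp Require Import all_boot all_order all_algebra.
Set Implicit Arguments. Unset Strict Implicit. Unset Printing Implicit Defensive.

(* The partial sums satisfy Z_(k-1) <= Z_0 + (k-1)H <= (k+1)H - 1 =: a_k,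
   and t |-> t / (kN + t) is nondecreasing, so Z_(k-1) / (kN + Z_(k-1)) <= a_k / (kN + a_k):
   taking square roots gives the first inequality.  The weight a_k / (kN + a_k) is largest
   at k = 1, which gives the second one. *)
From HB Require Import structures.
From mathcomp Require Import all_boot all_order all_algebra.
From mathcomp Require Import ring lra.
Import Order.TTheory GRing.Theory Num.Theory.
Local Open Scope ring_scope.

Lemma ler_ratio_shift (R : realFieldType) (c x y : R) :
  0 <= c -> 0 < x -> x <= y -> x / (c + x) <= y / (c + y).
Proof.
move=> c0 x0 xy.
rewrite ler_pdivrMr; last lra.
rewrite mulrAC ler_pdivlMr; last lra.
rewrite -subr_ge0.
have -> : y * (c + x) - x * (c + y) = c * (y - x) by ring.
apply: mulr_ge0; lra.
Qed.

Lemma ler_div_sqrt_shift (R : rcfType) (z x a c : R) :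
  0 <= z -> 0 < x -> x <= a -> 0 <= c ->
  z / Num.sqrt (c + x) <= Num.sqrt (a / (c + a)) * (z / Num.sqrt x).
Proof.
move=> z0 x0 xa c0.
have sx : 0 < Num.sqrt x by rewrite sqrtr_gt0.
have scx : 0 < Num.sqrt (c + x) by rewrite sqrtr_gt0; lra.
rewrite mulrCA ler_wpM2l //.
rewrite -[(Num.sqrt (c + x))^-1]div1r ler_pdivrMr // mulrAC ler_pdivlMr //.
rewrite -sqrtrM; last by apply: divr_ge0; lra.
rewrite mul1r ler_sqrt; last by apply: mulr_ge0; [apply: divr_ge0|]; lra.
rewrite -ler_pdivrMr; last lra.
exact: ler_ratio_shift.
Qed.

Lemma weight_le_weight1 (R : rcfType) (N H : R) (k : nat) :
  1 <= N -> 1 <= H -> (1 <= k)%N ->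
  Num.sqrt ((k.+1%:R * H - 1) / (k%:R * N + k.+1%:R * H - 1)) <=
  Num.sqrt ((2 * H - 1) / (N + 2 * H - 1)).
Proof.
move=> hN hH hk.
have k1 : 1 <= k%:R :> R by rewrite ler1n.
rewrite -natr1; set x := k%:R.
rewrite ler_sqrt; last by apply: divr_ge0; lra.
rewrite ler_pdivrMr; last nra.
rewrite mulrAC ler_pdivlMr; last lra.
rewrite -subr_ge0.
have -> : (2 * H - 1) * (x * N + (x + 1) * H - 1) - ((x + 1) * H - 1) * (N + 2 * H - 1)
          = N * ((x - 1) * (H - 1)) by ring.
apply: mulr_ge0; first lra.
apply: mulr_ge0; lra.
Qed.

Lemma partial_sum_bounds {R : realDomainType} {H : R} {n : nat} {z Z : nat -> R} :
  (forall k, (1 <= k <= n)%N -> 0 <= z k <= H) ->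
  (forall k, (1 <= k <= n)%N -> Z k = Z k.-1 + z k) ->
  forall k, (k <= n)%N -> Z 0%N <= Z k <= Z 0%N + k%:R * H.
Proof.
move=> hz hZ; elim=> [|k IH] kn; first by rewrite mul0r addr0 lexx.
have /andP[Z0Zk ZkH] := IH (ltnW kn).
have /andP[z0 zH] : 0 <= z k.+1 <= H by apply: hz; rewrite kn.
rewrite (hZ k.+1) ?kn //= -natr1; apply/andP; split; lra.
Qed.

Theorem corollary6 (R : rcfType) (N H : R) (n : nat) (z Z : nat -> R)
  (hN : 1 <= N) (hH : 1 <= H) (hn : (1 <= n)%N)
  (hz : forall k : nat, (1 <= k <= n)%N -> 0 <= z k <= H)
  (hZ0 : 1 <= Z 0%N <= 2 * H - 1)
  (hZ : forall k : nat, (1 <= k <= n)%N -> Z k = Z k.-1 + z k) :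
  \sum_(1 <= k < n.+1) z k / Num.sqrt (k%:R * N + Z k.-1)
    <= \sum_(1 <= k < n.+1)
         Num.sqrt ((k.+1%:R * H - 1) / (k%:R * N + k.+1%:R * H - 1))
           * (z k / Num.sqrt (Z k.-1))
  /\
  \sum_(1 <= k < n.+1)
         Num.sqrt ((k.+1%:R * H - 1) / (k%:R * N + k.+1%:R * H - 1))
           * (z k / Num.sqrt (Z k.-1))
    <= Num.sqrt ((2 * H - 1) / (N + 2 * H - 1))
         * \sum_(1 <= k < n.+1) z k / Num.sqrt (Z k.-1).
Proof.
case/andP: hZ0 => Z0_ge1 Z0_le.
split; last first.
  rewrite mulr_sumr; apply: ler_sum_nat => k /andP[k1 kn].
  have /andP[z0 _] : 0 <= z k <= H by apply: hz; rewrite k1 -ltnS.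
  rewrite ler_wpM2r ?weight_le_weight1 //.
  by apply: divr_ge0 => //; apply: sqrtr_ge0.
apply: ler_sum_nat => -[//|k] /andP[_ kn] /=.
have /andP[z0 _] := hz k.+1 kn.
have /andP[Z0Zk ZkH] := partial_sum_bounds hz hZ k (ltnW kn).
have Zk_le : Z k <= k.+2%:R * H - 1 by rewrite -!natr1; lra.
rewrite -addrA; apply: ler_div_sqrt_shift => //; first lra.
by apply: mulr_ge0 => //; lra.
Qed.
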